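(* Let $X=GL_n/B$ be the complete flag variety over a field $k$ of characteristic $0$, $d=n(n-1)/2=\dim X$, and identify $\Omega^*(X)\cong\mathbb{L}[x_1,\ldots,x_n]/S$. Let $c\in\Omega^*(X)$ be a homogeneous element of degree $l$ such that the product of $c$ with any non-constant monomial in $x_1,\ldots,x_n$ is zero. Then $c\in\mathbb{L}^{l-d}[pt]$, i.e. $c=a[pt]$ for some $a\in\mathbb{L}$ of degree $l-d$, where $[pt]$ is the class of a point.
   Context: $\mathbb{L}\cong\mathbb{Z}[a_1,a_2,\ldots]$ is the Lazard ring, graded with $\deg a_i=-i$; $x_i=c_1(L_i)$ where $L_i$ is the line bundle on $X$ with fiber $F^i/F^{i-1}$ at a flag $F$, $\deg x_i=1$; $S$ is the ideal generated by the symmetric polynomials of strictly positive polynomial degree, and the isomorphism sends $x_i$ to $c_1(L_i)$. *)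

From mathcomp Require Import all_boot all_algebra.
From mathcomp Require Import finmap.
From mathcomp.multinomials Require Import monalg.
From mathcomp.multinomials Require Import mpoly.

Set Implicit Arguments.
Unset Strict Implicit.
Unset Printing Implicit Defensive.

Local Open Scope ring_scope.

(* The Lazard ring  L = Z[a_1, a_2, ...]  (polynomials with integer
   coefficients in countably many variables).  The variable with index
   i : nat (a monomial exponent k has exponent  k i  at i) stands for
   a_(i+1), whose degree is  -(i+1). *)
Definition Laz : comNzRingType := {malg int[cmonom nat]}.

Definition Lmon_deg (k : cmonom nat) : int :=
  - ((\sum_(i <- finsupp k) (i.+1 * k i)%N)%N)%:Z.

Definition Lhomog (l : int) (a : Laz) : Prop :=
  forall k : cmonom nat, k \in monalg.msupp a -> Lmon_deg k = l.

(* L[x_1, ..., x_n]; the variable x_(i+1) is 'X_i for i : 'I_n. *)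
Definition Omega (n : nat) : comNzRingType := mpoly.mpoly n Laz.

Definition homog_of (n : nat) (l : int) (p : Omega n) : Prop :=
  forall m : 'X_{1..n}, m \in mpoly.msupp p ->
  forall k : cmonom nat, k \in monalg.msupp (mpoly.mcoeff m p) ->
    (mpoly.mdeg m)%:Z + Lmon_deg k = l.

Definition xhomog (n : nat) (e : nat) (p : Omega n) : Prop :=
  forall m : 'X_{1..n}, m \in mpoly.msupp p -> mpoly.mdeg m = e.

Definition Sgen (n : nat) (s : Omega n) : Prop :=
  s \is symmetric /\ exists e : nat, (0 < e)%N /\ xhomog e s.

Definition inS (n : nat) (p : Omega n) : Prop :=
  exists rs : seq (Omega n * Omega n),
    (forall q, q \in rs -> Sgen q.2) /\
    p = \sum_(q <- rs) q.1 * q.2.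

Definition xmon (n : nat) (m : 'X_{1..n}) : Omega n := 'X_[m].

(* The class of a point: x_1^(n-1) x_2^(n-2) ... x_(n-1)^1 x_n^0
   (the point class is +- this monomial; the sign is
   irrelevant for the statement). *)
Definition pt_class (n : nat) : Omega n :=
  xmon [multinom (n - i.+1)%N | i < n].

Definition flag_dim (n : nat) : nat := (n * (n - 1))./2.

(* The L-linear functional [integ p], the coefficient of x^delta (delta = (n-1, ..., 1, 0))
   in the antisymmetrization of p, satisfies [integ x^delta = 1] and vanishes on S:
   antisymmetrization is linear over symmetric polynomials, an antisymmetric polynomial
   has no monomial with a repeated exponent, and the only exponent below delta without
   repetition is delta itself.  Modulo S, the relations h_k(x_1, ..., x_j) = 0 for
   k > n - j rewrite every polynomial as an L-combination of standard monomials x^a,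
   a <= delta.  If c is killed by all non-constant monomials and r is such a
   representative of c, then multiplying by x^(delta - a) and integrating shows, by
   induction on a in lexicographic order, that the coefficient of r at every a <> delta
   vanishes.  Hence c = (integ c) x^delta modulo S, and integ c has degree l - d because
   integ only reads coefficients at monomials of degree d. *)

From HB Require Import structures.
From mathcomp Require Import all_boot all_order all_algebra all_fingroup.
From mathcomp Require Import finmap zify ring.
From mathcomp.multinomials Require Import monalg mpoly.

Set Implicit Arguments.
Unset Strict Implicit.
Unset Printing Implicit Defensive.

Import Order.TTheory GRing.Theory.
Local Open Scope ring_scope.

Section IdealS.
Variable n : nat.
Local Notation MP := {mpoly Laz[n]}.

Lemma inS0 : inS (0 : MP).
Proof. by exists [::]; rewrite big_nil. Qed.

Lemma inSD (p q : MP) : inS p -> inS q -> inS (p + q).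
Proof.
move=> [rp [Sp ->]] [rq [Sq ->]]; exists (rp ++ rq); rewrite big_cat; split=> //.
by move=> x; rewrite mem_cat => /orP[]; [apply: Sp | apply: Sq].
Qed.

Lemma inSMl (r p : MP) : inS p -> inS (r * p).
Proof.
move=> [rs [Srs ->]]; exists [seq (r * q.1, q.2) | q <- rs]; split.
  by move=> _ /mapP[q rs_q ->]; exact: Srs rs_q.
by rewrite big_map mulr_sumr; apply: eq_bigr => q _; rewrite mulrA.
Qed.

Lemma inSN (p : MP) : inS p -> inS (- p).
Proof. by rewrite -mulN1r; apply: inSMl. Qed.

Lemma inSB (p q : MP) : inS p -> inS q -> inS (p - q).
Proof. by move=> Sp /inSN; apply: inSD. Qed.

Lemma inSMr (r p : MP) : inS p -> inS (p * r).
Proof. by rewrite mulrC; apply: inSMl. Qed.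

Lemma inSZ (a : Laz) (p : MP) : inS p -> inS (a *: p).
Proof. by rewrite -mul_mpolyC; apply: inSMl. Qed.

Lemma inS_sum (I : Type) (r : seq I) (F : I -> MP) :
  (forall i, inS (F i)) -> inS (\sum_(i <- r) F i).
Proof.
move=> SF; elim: r => [|i r IHr]; first by rewrite big_nil; apply: inS0.
by rewrite big_cons; apply: inSD.
Qed.

Lemma Sgen_inS (s : MP) : Sgen s -> inS s.
Proof.
by move=> Ss; exists [:: (1, s)]; rewrite big_seq1 mul1r; split=> // q /[1!inE] /eqP->.
Qed.

End IdealS.

Lemma Laz_addrr_eq0 (x : Laz) : x + x = 0 -> x = 0.
Proof.
move=> xx0; apply/malgP => k; have := congr1 (monalg.mcoeff k) xx0.
by rewrite monalg.mcoeffD !monalg.mcoeff0; lia.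
Qed.

Lemma Lhomog0 l : Lhomog l 0.
Proof. by move=> k; rewrite monalg.msupp0 in_fset0. Qed.

Lemma LhomogD l a b : Lhomog l a -> Lhomog l b -> Lhomog l (a + b).
Proof.
by move=> Ha Hb k /(fsubsetP (monalg.msuppD_le _ _)) /fsetUP[/Ha | /Hb].
Qed.

Lemma LhomogN l a : Lhomog l a -> Lhomog l (- a).
Proof. by move=> Ha k; rewrite monalg.msuppN; apply: Ha. Qed.

Lemma Lhomog_sum l (I : Type) (r : seq I) (F : I -> Laz) :
  (forall i, Lhomog l (F i)) -> Lhomog l (\sum_(i <- r) F i).
Proof.
move=> HF; elim: r => [|i r IHr]; first by rewrite big_nil; apply: Lhomog0.
by rewrite big_cons; apply: LhomogD.
Qed.

Lemma Lhomog_signr l (b : bool) a : Lhomog l a -> Lhomog l ((-1) ^+ b * a).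
Proof. by case: b => Ha; rewrite ?expr1 ?mulN1r ?mul1r //; apply: LhomogN. Qed.

Section Integration.
Variable n : nat.
Local Notation MP := {mpoly Laz[n]}.

Definition delta : 'X_{1..n} := [multinom (n - i.+1)%N | i < n].

Definition antisym (p : MP) : MP := \sum_(s : 'S_n) (-1) ^+ s *: msym s p.

Definition integ (p : MP) : Laz := (antisym p)@_delta.

Fact integ_is_additive : additive integ.
Proof.
move=> p q; rewrite /integ /antisym -mcoeffB -sumrB.
by congr (_@__); apply: eq_bigr => s _; rewrite raddfB scalerBr.
Qed.

HB.instance Definition _ :=
  GRing.isAdditive.Build MP Laz integ integ_is_additive.

Lemma antisymZ (a : Laz) (p : MP) : antisym (a *: p) = a *: antisym p.
Proof.
rewrite /antisym scaler_sumr; apply: eq_bigr => s _.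
by rewrite msymZ !scalerA mulrC.
Qed.

Lemma integZ (a : Laz) (p : MP) : integ (a *: p) = a * integ p.
Proof. by rewrite /integ antisymZ mcoeffZ. Qed.

Lemma antisymMsym (q s : MP) : s \is symmetric -> antisym (q * s) = antisym q * s.
Proof.
move/issymP => sym_s; rewrite /antisym mulr_suml; apply: eq_bigr => t _.
by rewrite msymM sym_s mpoly_scaleAl.
Qed.

Lemma msym_tperm_antisym (q : MP) (i j : 'I_n) : i != j ->
  msym (tperm i j) (antisym q) = - antisym q.
Proof.
move=> nij; rewrite /antisym raddf_sum /= -sumrN.
rewrite [in RHS](reindex_inj (mulIg (tperm i j))) /=; apply: eq_bigr => s _.
rewrite msymZ -msymMm odd_permM odd_tperm nij signr_addb expr1.
by rewrite mulrN1 scaleNr opprK.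
Qed.

Lemma mcoeff_antisym_eq0 (q : MP) (nu : 'X_{1..n}) (i j : 'I_n) :
  i != j -> nu i = nu j -> (antisym q)@_nu = 0.
Proof.
move=> nij nu_ij; apply: Laz_addrr_eq0.
have nu_swap : [multinom nu (tperm i j k) | k < n] = nu.
  by apply/mnmP => k; rewrite mnmE; case: tpermP => [->|->|].
have : (msym (tperm i j) (antisym q))@_nu = (antisym q)@_nu.
  by rewrite mcoeff_sym nu_swap.
by rewrite msym_tperm_antisym // mcoeffN => E; rewrite -{1}E addNr.
Qed.

Lemma deltaE (i : 'I_n) : delta i = (n - i.+1)%N.
Proof. by rewrite mnmE. Qed.

Lemma delta_inj (i j : 'I_n) : delta i = delta j -> i = j.
Proof.
rewrite !deltaE => eq_ij; apply/val_inj => /=.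
by have := ltn_ord i; have := ltn_ord j; lia.
Qed.

(* The entries of delta are 0, ..., n-1, so an injective multinomial below it has
   the same entry sum, hence equals it. *)
Lemma le_delta_inj_eq (nu : 'X_{1..n}) : (forall i, nu i <= delta i)%N ->
  (forall i j, nu i = nu j -> i = j) -> nu = delta.
Proof.
move=> le_nu inj_nu.
have lt_nu i : (nu i < n)%N.
  by have := le_nu i; have := ltn_ord i; rewrite deltaE; lia.
pose f i := Ordinal (lt_nu i).
have inj_f : injective f by move=> i j /(congr1 val) /inj_nu.
have sum_nu : (\sum_(i < n) nu i = \sum_(i < n) (i : nat))%N.
  by rewrite [in RHS](reindex_inj inj_f).
have sum_delta : (\sum_(i < n) delta i = \sum_(i < n) (i : nat))%N.
  rewrite (reindex_inj rev_ord_inj); apply: eq_bigr => i _.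
  by rewrite deltaE /=; have := ltn_ord i; lia.
have le_nu_if i : true -> (nu i <= delta i ?= iff (nu i == delta i))%N.
  by move=> _; apply: leqif_eq.
have := (leqif_sum le_nu_if).2; rewrite sum_nu sum_delta eqxx => /esym/forallP eq_nu.
by apply/mnmP => i; apply/eqP; have := eq_nu i.
Qed.

Lemma integX (g : 'X_{1..n}) : integ 'X_[g] =
  \sum_(s : 'S_n) (-1) ^+ s * ([multinom g ((s^-1)%g i) | i < n] == delta)%:R.
Proof.
rewrite /integ /antisym raddf_sum /=; apply: eq_bigr => s _.
by rewrite mcoeffZ msymX mcoeffX.
Qed.

Lemma integX_delta : integ 'X_[delta] = 1.
Proof.
rewrite integX (bigD1 1%g) //= big1 => [|s s_neq1].
  rewrite odd_perm1 invg1 mul1r addr0.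
  rewrite (_ : [multinom _ | i < n] = delta) ?eqxx //.
  by apply/mnmP => i; rewrite mnmE perm1.
case: eqP => [delta_s|]; last by rewrite mulr0.
case/eqP: s_neq1; apply/permP => i; apply/delta_inj.
by have := congr1 (fun m : 'X_{1..n} => m (s i)) delta_s; rewrite mnmE permK perm1.
Qed.

Lemma integX_neq0 (g : 'X_{1..n}) : integ 'X_[g] != 0 ->
  exists s : 'S_n, forall k, g (s k) = delta k.
Proof.
rewrite integX; have [/existsP[s /eqP g_s] _|/existsPn no_s] :=
  boolP [exists s : 'S_n, [multinom g ((s^-1)%g i) | i < n] == delta].
  exists (s^-1)%g => k.
  by have := congr1 (fun m : 'X_{1..n} => m k) g_s; rewrite mnmE.
by rewrite big1 ?eqxx // => s _; rewrite (negbTE (no_s s)) mulr0.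
Qed.

Lemma integ_Msym (q s : MP) : s \is symmetric -> s@_0%MM = 0 ->
  integ (q * s) = 0.
Proof.
move=> sym_s s0; rewrite /integ antisymMsym // mcoeffM.
apply: big1 => -[[nu _] [mu _]] /= /eqP delta_E.
have [->|mu_neq0] := eqVneq mu 0%MM; first by rewrite s0 mulr0.
have [/existsP[i /existsP[j /andP[nij /eqP nu_ij]]]|/existsPn distinct] :=
  boolP [exists i : 'I_n, exists j : 'I_n, (i != j) && (nu i == nu j)].
  by rewrite (mcoeff_antisym_eq0 q nij nu_ij) mul0r.
have nu_delta : nu = delta.
  apply: le_delta_inj_eq => [i|i j nu_ij]; first by rewrite delta_E mnmDE leq_addr.
  by apply/eqP; move/existsPn: (distinct i) => /(_ j); rewrite nu_ij eqxx andbT negbK.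
case/eqP: mu_neq0; apply/mnmP => i; have := congr1 (fun m : 'X_{1..n} => m i) delta_E.
by rewrite mnmDE nu_delta mnm0E; lia.
Qed.

Lemma integ_inS (p : MP) : inS p -> integ p = 0.
Proof.
move=> [rs [Srs ->]]; rewrite raddf_sum big_seq big1 // => q.
move=> /Srs[sym_q [e [e_gt0 homog_q]]].
apply: integ_Msym => //; apply/eqP; rewrite mcoeff_eq0; apply/negP => /homog_q.
by rewrite mdeg0 => e0; rewrite -e0 in e_gt0.
Qed.

Lemma mdeg_delta : mdeg delta = flag_dim n.
Proof.
rewrite mdegE (reindex_inj rev_ord_inj) /=.
rewrite (eq_bigr (fun i : 'I_n => nat_of_ord i)) => [|i _]; last first.
  by rewrite deltaE /=; have := ltn_ord i; lia.
by rewrite -(big_mkord xpredT (fun i => i)) bin2_sum bin2 /flag_dim subn1.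
Qed.

Lemma integ_homog (l : int) (c : MP) : homog_of l c ->
  Lhomog (l - (flag_dim n)%:Z) (integ c).
Proof.
move=> homog_c; rewrite /integ /antisym raddf_sum /=; apply: Lhomog_sum => s.
rewrite mcoeffZ mcoeff_sym; apply: Lhomog_signr; set m := [multinom _ | i < n].
have [c_m|/memN_msupp_eq0 ->] := boolP (m \in msupp c); last exact: Lhomog0.
move=> k /(homog_c m c_m); rewrite mdeg_mperm mdeg_delta; lia.
Qed.

End Integration.

Section Support.
Variable n : nat.
Local Notation MP := {mpoly Laz[n]}.

Definition supp_in (A : 'X_{1..n} -> Prop) (p : MP) :=
  forall m, m \in msupp p -> A m.

Lemma supp_in0 A : supp_in A 0.
Proof. by move=> m; rewrite msupp0. Qed.

Lemma supp_inD A p q : supp_in A p -> supp_in A q -> supp_in A (p + q).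
Proof. by move=> Ap Aq m /msuppD_le; rewrite mem_cat => /orP[/Ap | /Aq]. Qed.

Lemma supp_inN A p : supp_in A p -> supp_in A (- p).
Proof. by move=> Ap m; rewrite (perm_mem (msuppN p)); apply: Ap. Qed.

Lemma supp_inZ A (a : Laz) p : supp_in A p -> supp_in A (a *: p).
Proof. by move=> Ap m /msuppZ_le; apply: Ap. Qed.

Lemma supp_in_sum A (I : Type) (r : seq I) (F : I -> MP) :
  (forall i, supp_in A (F i)) -> supp_in A (\sum_(i <- r) F i).
Proof.
move=> AF; elim: r => [|i r IHr]; first by rewrite big_nil; apply: supp_in0.
by rewrite big_cons; apply: supp_inD.
Qed.

Lemma supp_inX (A : 'X_{1..n} -> Prop) m : A m -> supp_in A 'X_[m].
Proof. by move=> Am m'; rewrite msuppX inE => /eqP->. Qed.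

Lemma supp_in1 (A : 'X_{1..n} -> Prop) : A 0%MM -> supp_in A 1.
Proof. by move=> A0 m; rewrite msupp1 inE => /eqP->. Qed.

Lemma supp_inM (A B C : 'X_{1..n} -> Prop) p q :
  (forall a b, A a -> B b -> C (a + b)%MM) ->
  supp_in A p -> supp_in B q -> supp_in C (p * q).
Proof.
move=> ABC Ap Bq m /msuppM_le /allpairsP[[a b] /= [pa qb ->]].
by apply: ABC; [apply: Ap | apply: Bq].
Qed.

Lemma supp_in_sub (A B : 'X_{1..n} -> Prop) p :
  (forall m, A m -> B m) -> supp_in A p -> supp_in B p.
Proof. by move=> AB Ap m /Ap /AB. Qed.

End Support.

Lemma prod_1_plus_mulXn (R : comNzRingType) (I : Type) (N : nat) (r : seq I)
    (F : I -> {poly R}) :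
  (forall i, exists w, F i = 1 + w * 'X^N) ->
  exists w, \prod_(i <- r) F i = 1 + w * 'X^N.
Proof.
move=> F1; elim: r => [|i r [w IHr]]; first by exists 0; rewrite big_nil mul0r addr0.
have [wi Fi] := F1 i; exists (wi + w + wi * w * 'X^N).
by rewrite big_cons Fi IHr; ring.
Qed.

Lemma size_prod_leq2 (R : nzRingType) (I : Type) (r : seq I) (F : I -> {poly R}) :
  (forall i, (size (F i) <= 2)%N) -> (size (\prod_(i <- r) F i)%R <= (size r).+1)%N.
Proof.
move=> sizeF; elim: r => [|i r IHr]; first by rewrite big_nil size_poly1.
rewrite big_cons; apply: leq_trans (size_polyMleq _ _) _.
by have := sizeF i; move: IHr => /=; lia.
Qed.

Section CompleteSymmetric.
Variable n : nat.
Local Notation MP := {mpoly Laz[n]}.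
Local Notation PP := {poly MP}.

Definition xvar (i : nat) : MP := if insub i is Some k then 'X_k else 0.

Local Notation xt i := ((xvar i)%:P * 'X).

(* Up to t^n, [compl_series j] has the coefficients h_k(x_0, ..., x_(j-1)) and
   [elem_series] the coefficients (-1)^k e_k(x_0, ..., x_(n-1)). *)
Definition geom_trunc (i : nat) : PP := \sum_(b < n.+1) xt i ^+ b.

Definition elem_series : PP := \prod_(0 <= i < n) (1 - xt i).

Definition compl_series (j : nat) : PP := \prod_(0 <= i < j) geom_trunc i.

Lemma xvarE (k : 'I_n) : xvar k = 'X_k.
Proof. by rewrite /xvar; case: insubP => [k' _ /val_inj -> //|]; rewrite ltn_ord. Qed.

Definition mnm_below (j : nat) (m : 'X_{1..n}) :=
  forall i : 'I_n, (j <= i)%N -> m i = 0%N.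

Definition graded_below (j : nat) (f : PP) :=
  forall k, supp_in (fun m => mdeg m = k /\ mnm_below j m) f`_k.

Lemma graded_below_mono j j' f : (j <= j')%N -> graded_below j f -> graded_below j' f.
Proof.
move=> le_jj' gf k; apply: supp_in_sub (gf k) => m [-> below_m].
by split=> // i le_j'i; apply: below_m; apply: leq_trans le_j'i.
Qed.

Lemma graded_below1 j : graded_below j 1.
Proof.
move=> k; rewrite coef1; case: eqP => [->|_]; last exact: supp_in0.
by apply: supp_in1; split=> [|i _]; rewrite ?mdeg0 ?mnm0E.
Qed.

Lemma graded_belowD j f h : graded_below j f -> graded_below j h -> graded_below j (f + h).
Proof. by move=> gf gh k; rewrite coefD; apply: supp_inD. Qed.

Lemma graded_belowN j f : graded_below j f -> graded_below j (- f).
Proof. by move=> gf k; rewrite coefN; apply: supp_inN. Qed.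

Lemma graded_belowM j f h : graded_below j f -> graded_below j h -> graded_below j (f * h).
Proof.
move=> gf gh k; rewrite coefM; apply: supp_in_sum => a.
apply: supp_inM (gf a) (gh (k - a)%N) => x y [dx bx] [dy by_]; split.
  by rewrite mdegD dx dy subnKC // -ltnS.
by move=> i le_ji; rewrite mnmDE bx // by_.
Qed.

Lemma graded_below_sum j (I : Type) (r : seq I) (F : I -> PP) :
  (forall i, graded_below j (F i)) -> graded_below j (\sum_(i <- r) F i).
Proof. by move=> gF k; rewrite coef_sum; apply: supp_in_sum => i; apply: gF. Qed.

Lemma graded_below_prod j (r : seq nat) (F : nat -> PP) :
  (forall i, i \in r -> graded_below j (F i)) -> graded_below j (\prod_(i <- r) F i).
Proof.
move=> gF; rewrite big_seq; apply: big_ind => //; first exact: graded_below1.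
exact: graded_belowM.
Qed.

Lemma supp_in_xvarX i b : supp_in (fun m => mdeg m = b /\ mnm_below i.+1 m) (xvar i ^+ b).
Proof.
rewrite /xvar; case: insubP => [k _ ki|_]; last first.
  by case: b => [|b]; rewrite ?expr0 ?expr0n; [apply: supp_in1 | apply: supp_in0];
    split=> [|i' _]; rewrite ?mdeg0 ?mnm0E.
rewrite mpolyXn; apply: supp_inX; split; first by rewrite mdegMn mdeg1 mul1n.
move=> i' le_ii'; rewrite mulmnE mnm1E.
by case: eqP => [ki'|]; rewrite ?mul0n //; move: le_ii'; rewrite -ki' ki ltnn.
Qed.

Lemma coef_xtX i b k : (xt i ^+ b)`_k = if k == b then xvar i ^+ b else 0.
Proof.
rewrite exprMn -rmorphXn /= coefCM coefXn.
by case: eqP => _; rewrite ?mulr1 ?mulr0.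
Qed.

Lemma graded_below_xtX i b : graded_below i.+1 (xt i ^+ b).
Proof.
move=> k; rewrite coef_xtX; case: eqP => [->|_]; last exact: supp_in0.
exact: supp_in_xvarX.
Qed.

Lemma graded_below_compl j : graded_below j (compl_series j).
Proof.
apply: graded_below_prod => i; rewrite mem_index_iota => /andP[_ lt_ij].
by apply: graded_below_mono lt_ij _; apply: graded_below_sum => b; apply: graded_below_xtX.
Qed.

Lemma graded_below_elem : graded_below n elem_series.
Proof.
apply: graded_below_prod => i; rewrite mem_index_iota => /andP[_ lt_in].
apply: graded_below_mono lt_in _; apply: graded_belowD; first exact: graded_below1.
by apply: graded_belowN; rewrite -[xt i]expr1; apply: graded_below_xtX.
Qed.

Lemma coef0_xt i : (xt i)`_0 = 0.
Proof. by rewrite coefCM coefX mulr0. Qed.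

Lemma coef0_elem : elem_series`_0 = 1.
Proof. by rewrite coef0_prod big1 // => i _; rewrite coefB coef0_xt coef1 subr0. Qed.

Lemma coef0_compl j : (compl_series j)`_0 = 1.
Proof.
rewrite coef0_prod big1 // => i _; rewrite coef_sum big_ord_recl coef_xtX /= expr0.
by rewrite big1 ?addr0 // => b _; rewrite coef_xtX.
Qed.

Lemma coef_geom_trunc i b : (b <= n)%N -> (geom_trunc i)`_b = xvar i ^+ b.
Proof.
move=> le_bn; rewrite coef_sum (bigD1 (Ordinal (le_bn : b < n.+1)%N)) //= coef_xtX eqxx.
rewrite big1 ?addr0 // => k neq_kb; rewrite coef_xtX.
by case: eqP => // eq_bk; case/eqP: neq_kb; apply/val_inj.
Qed.

Lemma msym_mpolyX1 (s : 'S_n) (k : 'I_n) : msym s ('X_k : MP) = 'X_(s k).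
Proof.
rewrite msymX; congr mpolyX; apply/mnmP => i; rewrite !mnmE.
congr (nat_of_bool _); have [<-|neq] := eqVneq (s k) i; first by rewrite permK eqxx.
by apply/negbTE; apply: contra neq => /eqP->; rewrite permKV.
Qed.

Lemma coef_elem_sym k : elem_series`_k \is symmetric.
Proof.
apply/issymP => s; suff elem_sym : map_poly (msym s) elem_series = elem_series.
  by rewrite -coef_map elem_sym.
have -> : elem_series = \prod_(k < n) (1 - ('X_k)%:P * 'X).
  by rewrite /elem_series big_mkord; apply: eq_bigr => i _; rewrite xvarE.
rewrite rmorph_prod /= [RHS](reindex_inj (@perm_inj _ s)); apply: eq_bigr => i _.
by rewrite rmorphB rmorph1 rmorphM /= map_polyC map_polyX /= msym_mpolyX1.
Qed.

Lemma coef_elem_Sgen k : (0 < k)%N -> Sgen (elem_series`_k).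
Proof.
move=> k_gt0; split; first exact: coef_elem_sym.
by exists k; split=> // m /graded_below_elem[].
Qed.

Lemma geom_trunc_Msub i : geom_trunc i * (1 - xt i) = 1 - (xvar i)%:P ^+ n.+1 * 'X^(n.+1).
Proof. by rewrite mulrC -opprB mulNr -subrX1 opprB exprMn. Qed.

Lemma size_1subxt i : (size (1 - xt i)%R <= 2)%N.
Proof.
apply: leq_trans (size_polyD _ _) _; rewrite size_polyN size_poly1 geq_max /=.
apply: leq_trans (size_polyMleq _ _) _; rewrite size_polyX.
by have := size_polyC_leq1 (xvar i); case: (size _) => [|[]].
Qed.

(* The product of (1 + x_i t + ... + (x_i t)^n)(1 - x_i t) over i < j is 1 mod t^(n+1),
   leaving the polynomial prod_(j <= i < n) (1 - x_i t) of degree n - j. *)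
Lemma coef_compl_elem_eq0 j m : (j <= n)%N -> (n - j < m <= n)%N ->
  (compl_series j * elem_series)`_m = 0.
Proof.
move=> le_jn /andP[lt_m le_mn].
rewrite /elem_series (@big_cat_nat _ _ _ j) //= mulrA.
rewrite /compl_series -big_split /=.
have [w ->] : exists w, \prod_(0 <= i < j) (geom_trunc i * (1 - xt i)) = 1 + w * 'X^(n.+1).
  apply: prod_1_plus_mulXn => i; exists (- (xvar i)%:P ^+ n.+1).
  by rewrite mulNr geom_trunc_Msub.
rewrite mulrDl mul1r coefD -mulrA [X in w * X]mulrC mulrA coefMXn ltnS le_mn addr0.
apply: nth_default; apply: leq_trans (size_prod_leq2 _ size_1subxt) _.
by rewrite size_iota; lia.
Qed.

Lemma coef_compl_inS j m : (j <= n)%N -> (n - j < m <= n)%N -> inS (compl_series j)`_m.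
Proof.
move=> le_jn lt_m; have /eqP := coef_compl_elem_eq0 le_jn lt_m.
rewrite coefM big_ord_recr /= subnn coef0_elem mulr1 addrC addr_eq0 => /eqP->.
apply/inSN/inS_sum => a; apply/inSMl/Sgen_inS/coef_elem_Sgen.
by rewrite subn_gt0.
Qed.

Definition reduced_at (j : 'I_n) (mu : 'X_{1..n}) :=
  [/\ mdeg mu = (n - j)%N, (mu j < n - j)%N & forall i : 'I_n, (j < i)%N -> mu i = 0%N].

(* h_(n-j)(x_0, ..., x_j) lies in S; split off its x_j^(n-j) term. *)
Lemma mpolyX_power_reduction (j : 'I_n) : exists R : MP,
  inS ('X_[U_(j) *+ (n - j)] + R) /\ supp_in (reduced_at j) R.
Proof.
have lt_jn := ltn_ord j.
have := @coef_compl_inS j.+1 (n - j) lt_jn ltac:(apply/andP; split; lia).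
rewrite /compl_series big_nat_recr //= coefMr big_ord_recr /= subnn coef0_compl mul1r.
rewrite coef_geom_trunc ?leq_subr // xvarE mpolyXn addrC => S_h.
eexists; split; first exact: S_h.
apply: supp_in_sum => b; rewrite coef_geom_trunc; last by have := ltn_ord b; lia.
rewrite xvarE mpolyXn.
apply: (supp_inM _ (@graded_below_compl j _) (supp_inX (A := eq^~ (U_(j) *+ b)%MM) erefl)).
move=> a _ [deg_a below_a] ->; have lt_b := ltn_ord b.
split; first by rewrite mdegD deg_a mdegMn mdeg1 mul1n subnK // ltnW.
  by rewrite mnmDE below_a // mulmnE mnm1E eqxx mul1n.
move=> i lt_ji; rewrite mnmDE below_a ?(ltnW lt_ji) // mulmnE mnm1E.
by rewrite (_ : (j == i) = false) ?mul0n //; apply/negbTE; rewrite neq_ltn lt_ji.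
Qed.

End CompleteSymmetric.

Section StandardMonomials.
Variable n : nat.
Local Notation MP := {mpoly Laz[n]}.
Local Notation delta := (@delta n).

(* mpoly's well-order on monomials compares from index 0 (among equal degrees);
   reversing lets it drive inductions that compare from the last index. *)
Definition mrev (m : 'X_{1..n}) : 'X_{1..n} := [multinom m (rev_ord i) | i < n].

Lemma mdeg_mrev m : mdeg (mrev m) = mdeg m.
Proof.
by rewrite !mdegE (reindex_inj rev_ord_inj); apply: eq_bigr => i _; rewrite mnmE rev_ordK.
Qed.

Lemma mrev_lt (m m' : 'X_{1..n}) (j : 'I_n) : mdeg m' = mdeg m ->
  (m' j < m j)%N -> (forall i : 'I_n, (j < i)%N -> m' i = m i) -> (mrev m' < mrev m)%O.
Proof.
move=> deg_eq lt_j eq_gt; apply/ltmcP; first by rewrite !mdeg_mrev.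
exists (rev_ord j) => [i lt_i|]; last by rewrite !mnmE rev_ordK.
rewrite !mnmE; apply: eq_gt; move: lt_i => /=; have := ltn_ord i; lia.
Qed.

Definition standard (m : 'X_{1..n}) := forall i, (m i <= delta i)%N.

Definition std_reducible (p : MP) := exists r, inS (p - r) /\ supp_in standard r.

Lemma std_reducible0 : std_reducible 0.
Proof. by exists 0; rewrite subrr; split; [apply: inS0 | apply: supp_in0]. Qed.

Lemma std_reducibleD (p q : MP) :
  std_reducible p -> std_reducible q -> std_reducible (p + q).
Proof.
move=> [r [S_r std_r]] [r' [S_r' std_r']]; exists (r + r'); split; last exact: supp_inD.
by rewrite opprD addrACA; apply: inSD.
Qed.

Lemma std_reducibleZ (a : Laz) (p : MP) : std_reducible p -> std_reducible (a *: p).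
Proof.
move=> [r [S_pr std_r]]; exists (a *: r); split; last exact: supp_inZ.
by rewrite -scalerBr; apply: inSZ.
Qed.

Lemma std_reducibleN (p : MP) : std_reducible p -> std_reducible (- p).
Proof. by rewrite -scaleN1r; apply: std_reducibleZ. Qed.

Lemma std_reducible_sum (I : eqType) (s : seq I) (F : I -> MP) :
  {in s, forall i, std_reducible (F i)} -> std_reducible (\sum_(i <- s) F i).
Proof.
move=> redF; rewrite big_seq; apply: big_ind => //.
  exact: std_reducible0.
exact: std_reducibleD.
Qed.

Lemma std_reducible_congr (p q : MP) : inS (p - q) -> std_reducible q -> std_reducible p.
Proof.
move=> S_pq [r [S_qr std_r]]; exists r; split=> //.
by rewrite -(subrK q p) -addrA; apply: inSD.
Qed.

Lemma std_reducibleX (g : 'X_{1..n}) : std_reducible 'X_[g].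
Proof.
suff: forall m g, mrev g = m -> std_reducible 'X_[g] by move/(_ _ g erefl).
elim/(well_founded_ind (@ltom_wf n)) => m IHm {}g def_m; subst m.
have [/forallP std_g|/forallPn[j]] := boolP [forall i, g i <= delta i]%N.
  exists 'X_[g]; rewrite subrr; split; [exact: inS0 | exact: supp_inX].
rewrite deltaE -ltnNge => lt_j; have lt_jn := ltn_ord j.
have [R [S_R red_R]] := mpolyX_power_reduction j.
have [g' def_g] : exists g', g = (g' + U_(j) *+ (n - j))%MM.
  exists (g - U_(j) *+ (n - j))%MM; rewrite submK //; apply/mnm_lepP => i.
  by rewrite mulmnE mnm1E; case: eqP => [<-|_]; rewrite ?mul1n ?mul0n //; lia.
apply: (@std_reducible_congr _ (- ('X_[g'] * R))).
  by rewrite opprK def_g mpolyXD -mulrDr; apply: inSMl.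
apply: std_reducibleN; rewrite [R]mpolyE mulr_sumr; apply: std_reducible_sum => mu mu_R.
rewrite -scalerAr -mpolyXD; apply/std_reducibleZ/(IHm _ _ _ erefl).
have [deg_mu lt_mu gt_mu] := red_R mu mu_R.
apply: (mrev_lt (j := j)); rewrite def_g.
- by rewrite !mdegD deg_mu mdegMn mdeg1 mul1n.
- by rewrite !mnmDE ltn_add2l mulmnE mnm1E eqxx mul1n.
- move=> i lt_ji; rewrite !mnmDE gt_mu // mulmnE mnm1E.
  by rewrite (_ : (j == i) = false) ?mul0n //; apply/negbTE; rewrite neq_ltn lt_ji.
Qed.

Lemma std_reducible_all (p : MP) : std_reducible p.
Proof.
rewrite [p]mpolyE; apply: std_reducible_sum => m _.
exact/std_reducibleZ/std_reducibleX.
Qed.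

End StandardMonomials.

Section Socle.
Variable n : nat.
Local Notation MP := {mpoly Laz[n]}.
Local Notation delta := (@delta n).
Local Notation standard := (@standard n).

Lemma standard_le_delta (a : 'X_{1..n}) : standard a -> (a <= delta)%O.
Proof.
move=> std_a; have : (mdeg a <= mdeg delta)%N by rewrite !mdegE leq_sum.
rewrite leq_eqVlt => /orP[/eqP deg_a|/lt_mdeg_ltmc/ltW //].
by rewrite leNgt; apply/negP => /ltmcP-/(_ (esym deg_a))[j _]; rewrite ltnNge std_a.
Qed.

(* If x^(a' + delta - a) survives integration, it is a permutation of x^delta; comparing
   with delta at the first index where a' and a differ shows that a' comes first. *)
Lemma integX_shift_neq0_lt (a a' : 'X_{1..n}) : standard a -> a' != a ->
  integ 'X_[a' + (delta - a)] != 0 -> (a' < a)%O.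
Proof.
move=> std_a neq_a /integX_neq0[s perm_s].
set g := (a' + (delta - a))%MM in perm_s.
have gE i : g i = (a' i + (delta i - a i))%N by rewrite mnmDE mnmBE.
have g_inj x y : g x = g y -> x = y.
  by rewrite -(permKV s x) -(permKV s y) !perm_s => /delta_inj->.
have deg_g : mdeg g = mdeg delta.
  by rewrite !mdegE (reindex_inj (@perm_inj _ s)); apply: eq_bigr => i _; rewrite perm_s.
have deg_a : mdeg a' = mdeg a.
  have := mdegD a' (delta - a); have := mdegD (delta - a) a.
  by rewrite submK -/g ?deg_g; [lia | apply/mnm_lepP].
have [i0 neq_i0] : exists i0, a' i0 != a i0.
  apply/existsP; apply: contraR neq_a => /existsPn eq_a.
  by apply/eqP/mnmP => i; apply/eqP; rewrite -[_ == _]negbK eq_a.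
case: (arg_minnP (P := fun i : 'I_n => a' i != a i) (@nat_of_ord n) neq_i0).
move=> j neq_j min_j.
have eq_lt (i : 'I_n) : (i < j)%N -> a' i = a i.
  by move=> lt_ij; apply/eqP; apply: contraTT lt_ij => /min_j; rewrite -leqNgt.
apply/ltmcP => //; exists j => //.
rewrite ltn_neqAle neq_j leqNgt /=; apply/negP => lt_j.
pose k := (s^-1)%g j.
have g_j : g j = delta k by rewrite -perm_s /k permKV.
have lt_kj : (k < j)%N.
  have := std_a j; move: g_j; rewrite gE !deltaE.
  by have := ltn_ord k; have := ltn_ord j; lia.
have g_k : g k = delta k by rewrite gE eq_lt // subnKC // std_a.
by move: lt_kj; rewrite (g_inj _ _ (etrans g_j (esym g_k))) ltnn.
Qed.

Lemma std_repr_socle (c r : MP) :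
  (forall m : 'X_{1..n}, (0 < mdeg m)%N -> inS (c * 'X_[m])) ->
  inS (c - r) -> supp_in standard r -> r = r@_delta *: 'X_[delta].
Proof.
move=> S_cm S_cr std_r.
suff r_eq0 a : a != delta -> r@_a = 0.
  apply/mpolyP => m; rewrite mcoeffZ mcoeffX.
  by have [<-|neq] := eqVneq delta m; rewrite ?mulr1 // mulr0 r_eq0 // eq_sym.
elim/(well_founded_ind (@ltom_wf n)): a => a IHa neq_a.
have [a_r|/memN_msupp_eq0 //] := boolP (a \in msupp r).
have std_a := std_r a a_r.
have le_a : (a <= delta)%MM by apply/mnm_lepP.
have deg_gt0 : (0 < mdeg (delta - a))%N.
  rewrite lt0n mdeg_eq0; apply: contra neq_a => /eqP eq0.
  by rewrite -(submK le_a) eq0 add0m.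
have := integ_inS (inSB (S_cm _ deg_gt0) (inSMr 'X_[delta - a] S_cr)).
rewrite -mulrBl subKr {1}[r]mpolyE mulr_suml raddf_sum (bigD1_seq a) //=.
rewrite big_seq_cond big1 => [|b /andP[b_r neq_b]].
  by rewrite addr0 -scalerAl -mpolyXD addmC submK // integZ integX_delta mulr1.
rewrite -scalerAl -mpolyXD integZ.
have [->|nz] := eqVneq (integ 'X_[b + (delta - a)]) 0; first by rewrite mulr0.
have lt_ba := integX_shift_neq0_lt std_a neq_b nz.
have neq_bd : b != delta by rewrite lt_eqF // (lt_le_trans lt_ba) // standard_le_delta.
by rewrite IHa // mul0r.
Qed.

End Socle.

Theorem lemma4p4 (n : nat) (l : int) (c : Omega n) :
  homog_of l c ->
  (forall m : 'X_{1..n}, (0 < mpoly.mdeg m)%N -> inS (c * xmon m)) ->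
  exists a : Laz,
    Lhomog (l - (flag_dim n)%:Z) a /\
    inS (c - a%:MP * pt_class n).
Proof.
move=> homog_c S_cm.
have [r [S_cr std_r]] := std_reducible_all c.
have r_delta := std_repr_socle S_cm S_cr std_r.
have integ_c : integ c = r@_(delta n).
  by rewrite -(subrK r c) raddfD /= integ_inS // add0r {1}r_delta integZ integX_delta mulr1.
exists (integ c); split; first exact: integ_homog.
by rewrite integ_c mul_mpolyC -r_delta.
Qed.
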